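(* Let $\Gamma$ be a finite set with $|\Gamma|\geq 2$, let $r\geq 2$, and let $W=\mathrm{Sym}(\Gamma)\wr S_r$ act on $\Omega=\Gamma^r$ in product action. If $H$ is a transitive nonabelian characteristically simple subgroup of $W$, then $H$ is contained in the base group, that is, $H\leq \mathrm{Sym}(\Gamma)^r$.
   Context: A finite group is characteristically simple if its only $\mathrm{Aut}$-invariant subgroups are $1$ and itself; equivalently it is a direct product of pairwise isomorphic simple groups. In the product action of $W=\mathrm{Sym}(\Gamma)\wr S_r$ on $\Gamma^r$, an element $(a_1,\ldots,a_r)b$ with $a_i\in\mathrm{Sym}(\Gamma)$ and $b\in S_r$ maps $(\gamma_1,\ldots,\gamma_r)$ to $(\gamma_{1b^{-1}}a_{1b^{-1}},\ldots,\gamma_{rb^{-1}}a_{rb^{-1}})$; the base group is $\mathrm{Sym}(\Gamma)^r$, the kernel of the natural projection $W\to S_r$. *)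

From mathcomp Require Import all_boot all_order all_fingroup all_solvable.
Set Implicit Arguments. Unset Strict Implicit. Unset Printing Implicit Defensive.
Local Open Scope group_scope.

Notation prod_omega Gamma r := {ffun 'I_r -> Gamma} (only parsing).

(* Image of gamma under (a_1,...,a_r) b in product action:
   i-th coordinate is gamma_{i b^-1} a_{i b^-1}. *)
Definition wr_act (Gamma : finType) (r : nat)
  (a : {ffun 'I_r -> {perm Gamma}}) (b : {perm 'I_r})
  (gamma : prod_omega Gamma r) : prod_omega Gamma r :=
  [ffun i => a (b^-1 i) (gamma (b^-1 i))].

Definition wreathW (Gamma : finType) (r : nat) : {set {perm prod_omega Gamma r}} :=
  [set g : {perm prod_omega Gamma r} | [exists a : {ffun 'I_r -> {perm Gamma}}, exists b : {perm 'I_r},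
             [forall gamma, g gamma == wr_act a b gamma]]].

Definition base_group (Gamma : finType) (r : nat) : {set {perm prod_omega Gamma r}} :=
  [set g : {perm prod_omega Gamma r} | [exists a : {ffun 'I_r -> {perm Gamma}},
             [forall gamma, g gamma == wr_act a 1 gamma]]].

From mathcomp Require Import all_boot all_order all_fingroup all_solvable.
From mathcomp Require Import zify.
Set Implicit Arguments. Unset Strict Implicit. Unset Printing Implicit Defensive.

(* Suppose some h in H moves a coordinate i and let D, with |D| >= 2, be the
   orbit of i under the permutations that H induces on the coordinates. The
   kernel L of H on D is normal, hence has a direct complement X in the
   characteristically simple group H, and X alone moves i around D. L fixes i,
   so it acts on the i-th factor Gamma; if t0 has an L-orbit of size s, spreading
   t0 over D with elements of X gives a point of Gamma^D whose stabiliser in H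
   contains that of t0 in L. By transitivity |Gamma|^|D| divides |H : L| s, and
   |H : L| divides |D|!, so Legendre's bound on the valuations of |D|! forces
   s = |Gamma| = 2. But L is a direct factor of the perfect group H, hence
   perfect, hence trivial on a 2-element set, contradicting s = 2. *)


Lemma logn_fact_partial_le p l m : 1 < p ->
  p.-1 * (\sum_(1 <= k < m.+1) l %/ p ^ k) + l %/ p ^ m <= l.
Proof.
move=> p_gt1; elim: m => [|m IHm]; first by rewrite big_geq // muln0 expn0 divn1.
rewrite big_nat_recr //= mulnDr -addnA.
have -> : p.-1 * (l %/ p ^ m.+1) + l %/ p ^ m.+1 = p * (l %/ p ^ m.+1).
  by rewrite -{2}(mul1n (l %/ _)) -mulnDl addn1 prednK // ltnW.
apply: leq_trans IHm; rewrite leq_add2l.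
by rewrite expnSr divnMA mulnC leq_divM.
Qed.

Lemma logn_fact_lt p l : prime p -> 0 < l -> p.-1 * logn p l`! < l.
Proof.
move=> p_pr l_gt0; have p_gt1 := prime_gt1 p_pr.
set m := trunc_log p l.
have le_pm_l : p ^ m <= l by apply: trunc_logP.
have lt_l_pm : l < p ^ m.+1 by apply: trunc_log_ltn.
have lt_m_l : m < l by apply: leq_trans (ltn_expl _ p_gt1) le_pm_l.
rewrite logn_fact // (big_cat_nat _ (n := m.+1)) //=; last by rewrite ltnS ltnW.
have -> : \sum_(m.+1 <= k < l.+1) l %/ p ^ k = 0.
  rewrite big_nat big1 // => k /andP[lt_mk _]; apply: divn_small.
  by apply: leq_trans lt_l_pm _; rewrite leq_exp2l.
rewrite addn0.
have := logn_fact_partial_le l m p_gt1.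
have : 0 < l %/ p ^ m by rewrite divn_gt0 ?expn_gt0 ?(ltnW p_gt1).
lia.
Qed.

Lemma expn_dvdn_fact_mul n l s : 1 < n -> 1 < l -> 0 < s -> s <= n ->
  n ^ l %| l`! * s -> s = n /\ n = 2.
Proof.
move=> n_gt1 l_gt1 s_gt0 le_sn dvd_nl.
have logn_le p : prime p -> l * logn p n <= logn p s + logn p l`!.
  move=> p_pr; rewrite -lognX addnC -lognM ?fact_gt0 //.
  by apply: dvdn_leq_log; rewrite ?muln_gt0 ?fact_gt0.
have legendre p : prime p -> p.-1 * logn p l`! <= l.-1.
  by move=> p_pr; have := logn_fact_lt p_pr (ltnW l_gt1); lia.
have dvd_ns : n %| s.
  apply/dvdn_partP => [|p]; first lia.
  rewrite mem_primes => /and3P[p_pr _ _]; rewrite p_part pfactor_dvdn //.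
  have := logn_le p p_pr; have := legendre p p_pr; have := prime_gt1 p_pr.
  move: (logn p n) (logn p s) (logn p l`!) => e f v; nia.
have def_s : s = n by apply/eqP; rewrite eqn_leq le_sn dvdn_leq.
split=> //; subst s.
have prime_div p : prime p -> p %| n -> p = 2 /\ logn p n = 1.
  move=> p_pr dvd_pn.
  have : 0 < logn p n by rewrite logn_gt0 mem_primes p_pr dvd_pn; lia.
  have := logn_le p p_pr; have := legendre p p_pr; have := prime_gt1 p_pr.
  move: (logn p n) (logn p l`!) => e v; nia.
have n2 : 2.-nat n.
  by apply/pnatP => [|p p_pr /(prime_div p p_pr)[-> _]]; rewrite ?inE //; lia.
have [q q_pr dvd_qn] := pdivP n_gt1; have [q2 logn_n] := prime_div q q_pr dvd_qn.
by rewrite -(part_pnat_id n2) p_part -q2 logn_n q2.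
Qed.

Local Open Scope group_scope.

Section CharSimple.
Variable gT : finGroupType.
Implicit Types G L M N S X : {group gT}.

Lemma charsimple_perfect G : charsimple G -> ~~ abelian G -> G^`(1) = G.
Proof.
case/charsimpleP=> _ simG nabG; apply: simG; last exact: der_char.
by apply: contra nabG => /eqP/derG1P.
Qed.

Lemma perfect_dprodl L X G : L \x X = G -> G^`(1) = G -> L^`(1) = L.
Proof.
move=> defG perfG; have := der_dprod 1 defG; rewrite perfG => defG'.
apply/eqP; rewrite eqEcard der_sub /=.
have := dprod_card defG; rewrite -(dprod_card defG').
have := subset_leq_card (der_sub 1 X); have := cardG_gt0 X.
move: #|L| #|X| #|L^`(1)| #|X^`(1)| => a b a' b'; nia.
Qed.

Lemma minnormal_autm G S f (Af : f \in Aut G) :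
  S \subset G -> minnormal S G -> minnormal (autm Af @* S) G.
Proof.
move=> sSG /mingroupP[/andP[ntS nSG] minS].
have sfSG : autm Af @* S \subset G by rewrite -{4}(im_autm Af) morphimS.
apply/mingroupP; rewrite andbC -{1}(im_autm Af) morphim_norms //=.
rewrite -subG1 sub_morphim_pre // -kerE ker_autm subG1.
split=> // N /andP[ntN nNG] sNfS.
have sNG : N \subset G := subset_trans sNfS sfSG.
apply/eqP; rewrite eqEsubset sNfS sub_morphim_pre //=.
rewrite -(morphim_invmE (injm_autm Af)) [_ @* N]minS //=.
  rewrite -subG1 sub_morphim_pre /= ?im_autm // morphpre_invm morphim1 subG1.
  by rewrite ntN -{1}(im_invm (injm_autm Af)) /= {2}im_autm morphim_norms.
by rewrite sub_morphim_pre /= ?im_autm // morphpre_invm.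
Qed.

Lemma charsimple_gen_Aut_images G S : charsimple G -> S \subset G -> S :!=: 1 ->
  <<\bigcup_(f in Aut G) f @: S>> = G.
Proof.
case/charsimpleP=> _ simG sSG ntS.
have sXG : \bigcup_(f in Aut G) f @: S \subset G.
  by apply/bigcupsP=> f Af; rewrite -(im_autm Af) morphimEdom imsetS.
apply: simG.
  apply: contra ntS; rewrite -!subG1; apply: subset_trans.
  rewrite sub_gen // (bigcup_max 1) ?group1 //.
  by apply/subsetP=> x Sx; apply/imsetP; exists x; rewrite ?perm1.
rewrite /characteristic gen_subG sXG; apply/forall_inP=> f Af.
rewrite -(autmE Af) -morphimEsub ?gen_subG ?morphim_gen // genS //.
rewrite morphimEsub //= autmE.
apply/subsetP=> _ /imsetP[_ /bigcupP[g Ag /imsetP[x Sx ->]] ->].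
apply/bigcupP; exists (g * f); first exact: groupM.
by apply/imsetP; exists x; rewrite // permM.
Qed.

Lemma normal_ti_dprod G M X : M <| G -> X <| G -> M :&: X = 1 -> M \x X = M <*> X.
Proof.
move=> /andP[sMG nMG] /andP[sXG nXG] tiMX; apply: dprodEY => //.
rewrite centsC (sameP commG1P trivgP) -tiMX subsetI commg_subl commg_subr.
by rewrite (subset_trans sMG) // (subset_trans sXG).
Qed.

Lemma minnormal_ti G S N : minnormal S G -> N <| G -> ~~ (S \subset N) -> S :&: N = 1.
Proof.
case/mingroupP=> /andP[_ nSG] minS /andP[_ nNG] sSN; apply/eqP/idPn=> ntSN.
by case/setIidPl: sSN; apply: minS; rewrite ?subsetIl // ntSN normsI.
Qed.

(* If [m = x s] lies in [M] then [s] lies in [M X], so [s = 1] and [m = x]. *)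
Lemma ti_joinr G M X S : X <| G -> S <| G -> M :&: X = 1 -> S :&: (M <*> X) = 1 ->
  M :&: (X <*> S) = 1.
Proof.
move=> /andP[sXG nXG] /andP[sSG nSG] tiMX tiSMX.
apply/trivgP/subsetP=> m /setIP[Mm]; rewrite /= norm_joinEr ?(subset_trans sSG) //.
case/imset2P=> x s Xx Ss def_m.
have MXs : s \in M <*> X.
  have -> : s = x^-1 * m by rewrite def_m mulKg.
  by rewrite groupM ?groupV ?mem_gen // inE ?Xx ?Mm ?orbT.
have : s \in S :&: (M <*> X) by rewrite inE Ss MXs.
rewrite tiSMX => /set1P s1.
by rewrite -tiMX inE Mm def_m s1 mulg1 Xx.
Qed.

Lemma charsimple_normal_dprod G M : charsimple G -> M <| G ->
  exists X : {group gT}, M \x X = G.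
Proof.
move=> csG nsMG; have /charsimpleP[ntG _] := csG.
have [S0 minS0 sS0G] : {S0 : {group gT} | minnormal S0 G & S0 \subset G}.
  by apply: mingroup_exists; rewrite ntG normG.
pose P (X : {group gT}) := (X <| G) && (M :&: X == 1).
have [X /maxgroupP[/andP[nsXG /eqP tiMX] maxX] _] :
    {X : {group gT} | maxgroup X P & [1 gT] \subset X}.
  by apply: maxgroup_exists; rewrite /P normal1 setIg1 eqxx.
have defMX := normal_ti_dprod nsMG nsXG tiMX.
exists X; rewrite defMX; apply/eqP; rewrite eqEsubset join_subG.
rewrite (normal_sub nsMG) (normal_sub nsXG) /=; apply/negPn/negP => sGMX.
have /andP[ntS0 _] := mingroupp minS0.
have [f Af sfS0MX] : exists2 f, f \in Aut G & ~~ (f @: S0 \subset M <*> X).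
  have : ~~ (<<\bigcup_(f in Aut G) f @: S0>> \subset M <*> X).
    by rewrite (charsimple_gen_Aut_images csG sS0G ntS0).
  rewrite gen_subG; case/subsetPn=> x /bigcupP[f Af fS0x] MXx.
  by exists f => //; apply/subsetPn; exists x.
set S := autm Af @* S0.
have minS : minnormal S G := minnormal_autm Af sS0G minS0.
have /andP[ntS nSG] := mingroupp minS.
have nsSG : S <| G by rewrite /normal nSG andbT -(im_autm Af) morphimS.
have nsMXG : M <*> X <| G := normalY nsMG nsXG.
have tiSMX : S :&: (M <*> X) = 1.
  by apply: minnormal_ti minS nsMXG _; rewrite /= morphimEsub //= autmE.
have maxXS : X <*> S = X.
  apply: maxX; last exact: joing_subl.
  by rewrite /P normalY //= (ti_joinr nsXG nsSG).
have sSX : S \subset X by rewrite -maxXS joing_subr.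
case/negP: ntS; rewrite -subG1 -tiSMX subsetI subxx /=.
exact: subset_trans sSX (joing_subr M X).
Qed.
End CharSimple.

Section ActionKernels.
Variables (aT : finGroupType) (D : {group aT}) (rT : finType) (to : action D rT).
Implicit Types G : {group aT}.

Lemma index_astab_dvdn_fact G (S : {set rT}) :
  [acts G, on S | to] -> #|G : 'C_G(S | to)| %| #|S|`!.
Proof.
move=> nSG; pose f := actperm <[nSG]>.
have kerf : 'ker f = 'C_G(S | to).
  by rewrite ker_actperm astab_actby setIT.
have imf : f @* G \subset perm.Sym_group S.
  apply/subsetP=> _ /morphimP[a _ Ga ->]; rewrite inE.
  apply/subsetP=> x; rewrite inE actpermE /= /actby Ga andbT.
  by case: (x \in S); rewrite ?eqxx.
by rewrite -kerf -{1}(setIid G) -card_morphim -perm.card_Sym cardSg.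
Qed.

Lemma perfect_astabT_card2 G : G \subset D -> G^`(1) = G -> #|rT| = 2 ->
  G \subset 'C(setT | to).
Proof.
move=> sGD perfG card_rT; pose f := actperm to.
have abT : abelian (perm.Sym_group [set: rT]).
  by rewrite cyclic_abelian ?prime_cyclic // perm.card_Sym cardsT card_rT.
have abfG : abelian (f @* G).
  apply: abelianS abT; apply/subsetP=> a _; rewrite inE.
  by apply/subsetP=> x _; rewrite inE.
have : f @* G = 1 by rewrite -perfG morphim_der // (derG1P abfG).
by move/eqP; rewrite -subG1 sub_morphim_pre // -kerE ker_actperm.
Qed.

End ActionKernels.

Section WreathTop.
Variables (T : finType) (r : nat).
Local Notation Om := {ffun 'I_r -> T}.
Local Notation W := (wreathW T r).
Implicit Types (g h : {perm Om}) (z w : Om).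

Definition wr_top g : {perm 'I_r} :=
  odflt 1 [pick b | [exists a, [forall z, g z == wr_act a b z]]].

Lemma wr_topP g : g \in W -> exists a, forall z, g z = wr_act a (wr_top g) z.
Proof.
rewrite inE => /existsP[a /existsP[b /forallP gE]].
rewrite /wr_top; case: pickP => [b' /existsP[a' /forallP gE']|no_b] /=.
  by exists a' => z; apply/eqP.
by case/existsP: (no_b b); exists a; apply/forallP.
Qed.

Lemma wr_top1_base g : g \in W -> wr_top g = 1 -> g \in base_group T r.
Proof.
case/wr_topP=> a gE top1; rewrite inE; apply/existsP; exists a.
by apply/forallP=> z; rewrite gE top1.
Qed.

Lemma wr_coordP g : g \in W ->
  exists a : {ffun 'I_r -> {perm T}}, forall z i, g z (wr_top g i) = a i (z i).
Proof. by case/wr_topP=> a gE; exists a => z i; rewrite gE ffunE permK. Qed.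

Lemma wr_coord_eq g z w i : g \in W -> z i = w i ->
  g z (wr_top g i) = g w (wr_top g i).
Proof. by case/wr_coordP=> a gE zw_i; rewrite !gE zw_i. Qed.

Lemma wr_coord_inj g z w i : g \in W ->
  g z (wr_top g i) = g w (wr_top g i) -> z i = w i.
Proof. by case/wr_coordP=> a gE; rewrite !gE; apply: perm_inj. Qed.

Hypothesis T_gt1 : 1 < #|T|.

(* Changing [z] in the single coordinate [i] changes [g z] exactly in the coordinate [b i]. *)
Lemma wr_top_unique g (b : {perm 'I_r}) (a : {ffun 'I_r -> {perm T}}) : g \in W ->
  (forall z i, g z (b i) = a i (z i)) -> wr_top g = b.
Proof.
move=> gW gE; apply/permP=> i; apply/eqP/negPn/negP=> ne_top.
have [a' gE'] := wr_coordP gW.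
set i' := (wr_top g)^-1 (b i); have top_i' : wr_top g i' = b i by rewrite permKV.
have ne_ii' : i != i' by apply: contra ne_top => /eqP {1}->; rewrite top_i'.
have /card_gt1P[t1 [t2 [_ _ ne_t12]]] := T_gt1.
pose z : Om := [ffun _ => t1].
pose w : Om := [ffun k => if k == i then t2 else t1].
have : g z (b i) = g w (b i) by rewrite -top_i' !gE' !ffunE eq_sym (negPf ne_ii').
by rewrite !gE !ffunE eqxx => /perm_inj/eqP; rewrite (negPf ne_t12).
Qed.

Lemma wr_topM g h : g \in W -> h \in W -> g * h \in W ->
  wr_top (g * h) = wr_top g * wr_top h.
Proof.
move=> gW hW ghW; have [a gE] := wr_coordP gW; have [a' hE] := wr_coordP hW.
apply: (wr_top_unique (a := [ffun i => a i * a' (wr_top g i)])) => // z i.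
by rewrite !permM ffunE permM hE gE.
Qed.

Section Subgroup.
Variable G : {group {perm Om}}.
Hypothesis sGW : G \subset W.

Lemma wr_topM_in : {in G &, {morph wr_top : g h / g * h}}.
Proof. by move=> g h gG hG; rewrite wr_topM ?(subsetP sGW) ?groupM. Qed.

Canonical wr_top_morphism := Morphism wr_topM_in.

Definition wr_top_act := ('P \o wr_top_morphism)%act.

Lemma wr_top_actE j g : wr_top_act j g = wr_top g j.
Proof. by []. Qed.

Lemma wr_top_act_dom : G \subset act_dom wr_top_act.
Proof. by apply/subsetP=> g gG; rewrite !inE gG. Qed.

Section Restriction.
Variable D : {set 'I_r}.
Hypothesis nDG : [acts G, on D | wr_top_act].

Lemma wr_top_actsP g j : g \in G -> (wr_top g j \in D) = (j \in D).
Proof. by move=> gG; rewrite -wr_top_actE astabs_act ?(subsetP nDG). Qed.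

(* [G] acts on [Gamma^D]; the coordinates outside [D] are carried along unchanged. *)
Definition wr_restr_act z g :=
  if g \in G then [ffun j => if j \in D then g z j else z j] else z.

Lemma wr_restr_is_action : is_action G wr_restr_act.
Proof.
split=> [g z w | z g h gG hG].
  rewrite /wr_restr_act; case: ifP => // gG /ffunP zw; apply/ffunP=> j.
  case Dj: (j \in D); last by have := zw j; rewrite !ffunE Dj.
  have := zw (wr_top g j); rewrite !ffunE wr_top_actsP // Dj.
  exact: wr_coord_inj (subsetP sGW g gG).
rewrite /wr_restr_act groupM // gG hG; apply/ffunP=> j; rewrite !ffunE permM.
case: ifP => // Dj; set i := (wr_top h)^-1 j.
have def_j : j = wr_top h i by rewrite permKV.
have Di : i \in D by rewrite -(wr_top_actsP i hG) -def_j.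
by rewrite def_j; apply: wr_coord_eq; rewrite ?(subsetP sGW) // ffunE Di.
Qed.

Canonical wr_restr_action := Action wr_restr_is_action.

Lemma card_orbit_wr_restr t0 z : [transitive G, on [set: Om] | 'P] ->
  (forall j, j \notin D -> z j = t0) ->
  #|orbit wr_restr_action G z| = (#|T| ^ #|D|)%N.
Proof.
move=> trG z_out; rewrite -(card_pffun_on t0 D T); apply: eq_card => w.
apply/idP/idP=> [/imsetP[g gG ->] | /pffun_onP[suppw _]].
  apply/pffun_onP; split=> //; apply/subsetP=> j.
  rewrite !inE /= /wr_restr_act gG ffunE.
  by case: ifP => // nDj; rewrite z_out ?nDj ?eqxx.
have [g gG gzw] := atransP2 trG (in_setT z) (in_setT w).
apply/imsetP; exists g => //; apply/ffunP=> j; rewrite /= /wr_restr_act gG ffunE.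
case: ifP => Dj; first by rewrite gzw.
rewrite z_out ?Dj //; apply/eqP; apply: contraFT Dj => wj.
by apply: (subsetP suppw); rewrite inE.
Qed.

End Restriction.

Section Coordinate.
Variable i : 'I_r.
Local Notation Gi := 'C_G[i | wr_top_act].

Lemma wr_top_stab g : g \in Gi -> g \in G /\ wr_top g i = i.
Proof. by case/setIP=> gG /astab_act fix_g; rewrite gG -wr_top_actE fix_g ?set11. Qed.

Definition wr_coord_act (t : T) g := if g \in Gi then g [ffun => t] i else t.

Lemma wr_coord_is_action : is_action Gi wr_coord_act.
Proof.
split=> [g t u | t g h gGi hGi].
  rewrite /wr_coord_act; case: ifP => // /wr_top_stab[gG fix_g].
  rewrite -{1 2}fix_g => /wr_coord_inj; rewrite !ffunE; apply.
  exact: (subsetP sGW).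
have [[gG fix_g] [hG fix_h]] := (wr_top_stab gGi, wr_top_stab hGi).
rewrite /wr_coord_act groupM // gGi hGi permM -{1 3}fix_h.
by apply: wr_coord_eq; rewrite ?(subsetP sGW) // ffunE.
Qed.

Canonical wr_coord_action := Action wr_coord_is_action.

End Coordinate.

Section StabiliserLift.
Variables (L X : {group {perm Om}}) (D : {set 'I_r}) (i : 'I_r).
Hypotheses (defG : L \x X = G) (nDG : [acts G, on D | wr_top_act]).
Hypotheses (Di : i \in D) (cDL : L \subset 'C(D | wr_top_act)).
Hypothesis sD_orbX : D \subset orbit wr_top_act X i.

Let sLG : L \subset G := normal_sub (dprod_normal2 defG).1.
Let sXG : X \subset G := normal_sub (dprod_normal2 defG).2.

Lemma wr_top_fix_kernel l j : l \in L -> j \in D -> wr_top l j = j.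
Proof. by move=> lL Dj; rewrite -wr_top_actE (astab_act (subsetP cDL l lL)). Qed.

Lemma sub_wr_top_stab : L \subset 'C_G[i | wr_top_act].
Proof. by rewrite subsetI sLG (subset_trans cDL) ?astabS ?sub1set. Qed.

(* Each [j] in [D] is [wr_top k i] for some [k] in [X]; [x] takes the value of
   [k z0] at [j], and as [k] commutes with [L], whatever fixes [t0] in the
   coordinate [i] fixes [x] in the coordinate [j]. *)
Lemma wr_coord_stab_lift t0 : exists2 x : Om, (forall j, j \notin D -> x j = t0) &
  'C_L[t0 | wr_coord_action i] \subset 'C_G[x | wr_restr_action nDG].
Proof.
have /fin_all_exists[k kP] :
    forall j, exists kj : {perm Om}, j \in D -> kj \in X /\ wr_top kj i = j.
  move=> j; case Dj: (j \in D); last by exists 1.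
  by have /orbitP[kj Xkj <-] := subsetP sD_orbX j Dj; exists kj.
pose z0 : Om := [ffun => t0].
exists [ffun j => if j \in D then k j z0 j else t0] => [j /negPf nDj|].
  by rewrite ffunE nDj.
have [_ _ cLX _] := dprodP defG.
apply/subsetP=> l /setIP[lL /astab_act/(_ (set11 t0)) fix_t0].
have lG := subsetP sLG l lL; have lW := subsetP sGW l lG.
rewrite !inE lG sub1set inE /=; apply/eqP/ffunP=> j.
rewrite /= /wr_restr_act lG ffunE; case: ifP => // Dj.
have [kX top_k] := kP j Dj; have kW := subsetP sGW _ (subsetP sXG _ kX).
have clk : commute (k j) l := centP (subsetP cLX _ kX) l lL.
rewrite [RHS]ffunE Dj -{1}(wr_top_fix_kernel lL Dj) (wr_coord_eq (w := k j z0) lW) //.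
  rewrite wr_top_fix_kernel // -permM clk permM -{2 4}top_k; apply: wr_coord_eq => //.
  by move: fix_t0; rewrite /= /wr_coord_act (subsetP sub_wr_top_stab l lL) ffunE.
by rewrite ffunE Dj.
Qed.

Lemma wr_restr_orbit_dvdn t0 : [transitive G, on [set: Om] | 'P] ->
  (#|T| ^ #|D|)%N %| #|G : L| * #|orbit (wr_coord_action i) L t0|.
Proof.
move=> trG; have [x x_out sCx] := wr_coord_stab_lift t0.
rewrite -(card_orbit_wr_restr nDG trG x_out) !card_orbit_in ?sub_wr_top_stab //.
by rewrite Lagrange_index ?subsetIl ?sLG // indexgS.
Qed.

End StabiliserLift.

Section CharacteristicallySimple.
Hypotheses (trG : [transitive G, on [set: Om] | 'P]).
Hypotheses (csG : charsimple G) (nabG : ~~ abelian G).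

Lemma wr_top_charsimple_fix g i : g \in G -> wr_top g i = i.
Proof.
move=> gG; set D := orbit wr_top_act G i; set L := 'C_G(D | wr_top_act).
have nDG : [acts G, on D | wr_top_act] := acts_orbit _ i wr_top_act_dom.
have [X defG] := charsimple_normal_dprod csG (normalGI nDG (astab_normal _ D)).
have Di : i \in D := orbit_refl _ _ _.
have sD_orbX : D \subset orbit wr_top_act X i.
  have sXG : X \subset G := normal_sub (dprod_normal2 defG).2.
  apply/subsetP=> _ /orbitP[h hG <-]; rewrite -(dprodW defG) in hG.
  case/mulsgP: hG => l x /setIP[lG cDl] xX ->; apply/orbitP; exists x => //.
  rewrite actMin ?(subsetP wr_top_act_dom) ?lG ?(subsetP sXG x xX) //.
  by congr (wr_top_act _ x); symmetry; apply: astab_act cDl Di.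
have D_le1 : #|D| <= 1.
  rewrite leqNgt; apply/negP=> D_gt1.
  have /card_gt0P[t0 _] : 0 < #|T| by apply: ltnW.
  set s := #|orbit (wr_coord_action i) L t0|.
  have sLGi : L \subset 'C_G[i | wr_top_act] := sub_wr_top_stab defG Di (subsetIr _ _).
  have s_gt0 : 0 < s by apply/card_gt0P; exists t0; apply: orbit_refl.
  have dvd_s : (#|T| ^ #|D|)%N %| #|D|`! * s.
    apply: dvdn_trans (wr_restr_orbit_dvdn defG nDG Di (subsetIr _ _) sD_orbX t0 trG) _.
    by rewrite dvdn_mul ?index_astab_dvdn_fact.
  have [s_T T2] := expn_dvdn_fact_mul T_gt1 D_gt1 s_gt0 (max_card _) dvd_s.
  have perfL := perfect_dprodl defG (charsimple_perfect csG nabG).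
  have cTL := perfect_astabT_card2 (wr_coord_action i) sLGi perfL T2.
  have : s <= 1.
    rewrite -(cards1 t0) subset_leq_card //.
    by apply/subsetP=> _ /orbitP[l lL <-]; rewrite (astab_act (subsetP cTL l lL)) ?inE.
  by rewrite s_T T2.
exact: (card_le1_eqP D_le1 i (wr_top g i) Di (mem_orbit _ i gG)).
Qed.

End CharacteristicallySimple.

End Subgroup.

End WreathTop.

Theorem theorem1p1 (Gamma : finType) (r : nat)
  (H : {group {perm prod_omega Gamma r}}) :
  1 < #|Gamma| -> 1 < r ->
  H \subset wreathW Gamma r ->
  [transitive H, on [set: prod_omega Gamma r] | 'P] ->
  ~~ abelian H ->
  charsimple H ->
  H \subset base_group Gamma r.
Proof.
move=> Gamma_gt1 _ sHW trH nabH csH; apply/subsetP=> h hH.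
apply: wr_top1_base; first exact: (subsetP sHW).
by apply/permP=> i; rewrite perm1 (wr_top_charsimple_fix Gamma_gt1 sHW trH csH nabH).
Qed.
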